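(* Let $q\in\mathbb{C}\setminus\{0\}$ with a fixed square root $q^{1/2}$, and let $D_x,D_y$ be invertible elements of an associative complex algebra satisfying $D_x^aD_y^b=q^{ab}D_y^bD_x^a$ for all $a,b\in\mathbb{Z}$. For $m=(m_1,m_2)\in\mathbb{Z}^2$ put $T_m=(q^{1/2})^{m_1m_2}D_y^{m_1}D_x^{m_2}$, and for $m,n\in\mathbb{Z}^2$ let $m\wedge n=m_1n_2-m_2n_1$. Define $[A,B]=AB-BA$ and, recursively for $n\ge3$, $$[A_1,\dots,A_n]=\sum_{s=1}^n(-1)^{s+1}A_s[A_1,\dots,\widehat{A_s},\dots,A_n].$$ Then for every $n\ge2$ and all $i_1,\dots,i_n\in\mathbb{Z}^2$, $$[T_{i_1},\dots,T_{i_n}]=\sum_{\sigma\in S_n}\mathrm{sgn}(\sigma)\,(q^{1/2})^{\sum_{1\le s<k\le n}i_{\sigma(k)}\wedge i_{\sigma(s)}}\;T_{i_1+\cdots+i_n}.$$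
   Context: The hat denotes omission of that entry. The elements $T_m$ satisfy $T_nT_m=(q^{1/2})^{m\wedge n}T_{n+m}$. *)

From HB Require Import structures.
From mathcomp Require Import all_boot all_order all_algebra all_fingroup.
From mathcomp Require Import reals.
From mathcomp Require Import complex.
Set Implicit Arguments. Unset Strict Implicit. Unset Printing Implicit Defensive.
Import Order.TTheory GRing.Theory Num.Theory.
Local Open Scope ring_scope.

(* Integer powers of an invertible element x with given two-sided inverse xi. *)
Definition zpow {A : nzRingType} (x xi : A) (a : int) : A :=
  match a with Posz n => x ^+ n | Negz n => xi ^+ n.+1 end.

Definition wedge (m n : int * int) : int := m.1 * n.2 - m.2 * n.1.

Definition Tm {R : realType} {A : lalgType R[i]} (h : R[i]) (Dx Dxi Dy Dyi : A)
  (m : int * int) : A :=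
  (h ^ (m.1 * m.2)) *: (zpow Dy Dyi m.1 * zpow Dx Dxi m.2).

(* Iterated bracket [A_1,...,A_k] of a list of length k >= 2:
   [A,B] = AB - BA and [A_1..A_k] = sum_s (-1)^(s+1) A_s [A_1..^A_s..A_k]
   (here s is 0-based, so the sign is (-1)^s). *)
Fixpoint nbr {A : nzRingType} (k : nat) (s : seq A) : A :=
  match k with
  | 0 | 1 => 0
  | 2 => nth 0 s 0 * nth 0 s 1 - nth 0 s 1 * nth 0 s 0
  | S k' => \sum_(t < k) (-1) ^+ t * nth 0 s t * nbr k' (take t s ++ drop t.+1 s)
  end.

Definition bracket {A : nzRingType} (s : seq A) : A := nbr (size s) s.

From HB Require Import structures.
From mathcomp Require Import all_boot all_order all_algebra all_fingroup.
From mathcomp Require Import reals.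
From mathcomp Require Import complex.
From mathcomp Require Import zify ring.
Import Order.TTheory GRing.Theory Num.Theory.
Local Open Scope ring_scope.

(* The recursion defining [A_1, ..., A_n] is the expansion of the standard
   polynomial sum_sigma sgn(sigma) A_sigma(1) ... A_sigma(n) according to the
   value of sigma(1), so the two agree by induction.  The elements T_m span a
   quantum torus, T_m T_n = h^(n /\ m) T_(m+n), so every ordered product of
   the T_(i_sigma(k)) is the scalar h^(sum_(s<k) i_sigma(k) /\ i_sigma(s))
   times T_(i_1 + ... + i_n). *)

Definition standard_poly {A : nzRingType} n (s : seq A) : A :=
  \sum_(sigma : 'S_n) (-1) ^+ sigma * \prod_(k < n) nth 0 s (sigma k).

Lemma nth_take_cat_drop T (x0 : T) (s : seq T) t m : (t < size s)%N ->
  nth x0 (take t s ++ drop t.+1 s) m = nth x0 s (bump t m).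
Proof.
move=> lt_t_s; rewrite nth_cat size_take lt_t_s /bump.
case: (ltnP m t) => [lt_mt | le_tm]; first by rewrite nth_take // leqNgt lt_mt.
by rewrite nth_drop; congr nth; rewrite add1n; lia.
Qed.

Lemma lift_perm_bij {n} (i j : 'I_n.+1) :
  {on [pred s : 'S_n.+1 | s i == j], bijective (lift_perm i j)}.
Proof.
pose ulsf i (s : 'S_n.+1) k := odflt k (unlift (s i) (s (lift i k))).
have ulsfK i0 (s : 'S_n.+1) k : lift (s i0) (ulsf i0 s k) = s (lift i0 k).
  rewrite /ulsf; have:= neq_lift i0 k.
  by rewrite -(can_eq (permK s)) => /unlift_some[] ? ? ->.
have inj_ulsf : injective (ulsf i _).
  move=> s; apply: can_inj (ulsf (s i) s^-1%g) _ => k.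
  by rewrite {1}/ulsf ulsfK !permK liftK.
exists (fun s => perm (inj_ulsf s)) => [s _ | s /eqP si].
  by apply/permP=> k; rewrite permE /ulsf lift_perm_lift lift_perm_id liftK.
apply/permP=> k; case: (unliftP i k) => [k'|] ->; rewrite ?lift_perm_id //.
by rewrite lift_perm_lift -si permE ulsfK.
Qed.

Lemma standard_poly_recl {A : nzRingType} n (s : seq A) : size s = n.+1 ->
  standard_poly n.+1 s =
  \sum_(t < n.+1) (-1) ^+ t * nth 0 s t * standard_poly n (take t s ++ drop t.+1 s).
Proof.
move=> size_s; rewrite /standard_poly.
rewrite (partition_big (fun sigma : 'S_n.+1 => sigma ord0) predT) //=.
apply: eq_bigr => j _; rewrite (reindex _ (lift_perm_bij ord0 j)) big_distrr /=.
apply: eq_big => [tau | tau _]; first by rewrite lift_perm_id eqxx.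
rewrite odd_lift_perm /= signr_addb big_ord_recl lift_perm_id.
have -> : \prod_(k < n) nth 0 s (lift_perm ord0 j tau (lift ord0 k))
        = \prod_(k < n) nth 0 (take j s ++ drop j.+1 s) (tau k).
  by apply: eq_bigr => k _; rewrite lift_perm_lift nth_take_cat_drop ?size_s.
rewrite signr_odd !mulrA; congr (_ * _); rewrite -!mulrA; congr (_ * _).
exact/esym/commr_sign.
Qed.

Lemma standard_poly1 {A : nzRingType} (s : seq A) : standard_poly 1 s = nth 0 s 0.
Proof.
rewrite /standard_poly (big_pred1 1%g) => [|sigma].
  by rewrite odd_perm1 expr0 mul1r big_ord1 perm1.
by apply/esym/eqP/permP => k; rewrite perm1 [LHS]ord1 [RHS]ord1.
Qed.

Lemma nbr_recl {A : nzRingType} k (s : seq A) :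
  nbr k.+3 s = \sum_(t < k.+3) (-1) ^+ t * nth 0 s t * nbr k.+2 (take t s ++ drop t.+1 s).
Proof. by []. Qed.

Lemma nbr_standard_poly {A : nzRingType} k (s : seq A) :
  (2 <= k)%N -> size s = k -> nbr k s = standard_poly k s.
Proof.
elim: k s => [|[|[|k]] IH] s // _ size_s.
  rewrite standard_poly_recl // !big_ord_recl big_ord0 !standard_poly1.
  rewrite !nth_take_cat_drop ?size_s //= /bump /=.
  by rewrite expr0 expr1 !mul1r mulN1r mulNr addr0.
rewrite nbr_recl standard_poly_recl //; apply: eq_bigr => t _; rewrite IH //.
by rewrite size_cat size_take size_drop size_s ltn_ord; have := ltn_ord t; lia.
Qed.

Lemma bracket_standard_poly {A : nzRingType} (s : seq A) :
  (2 <= size s)%N -> bracket s = standard_poly (size s) s.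
Proof. by move=> size_s; exact: nbr_standard_poly. Qed.

Section IntegerPowers.
Variables (A : nzRingType) (x xi : A).
Hypotheses (x_xi : x * xi = 1) (xi_x : xi * x = 1).

Lemma zpowD1 a : zpow x xi (a + 1) = zpow x xi a * x.
Proof.
case: a => [m|[|m]].
- have -> : Posz m + 1 = Posz m.+1 by rewrite -addn1 PoszD.
  by rewrite /= exprSr.
- by rewrite /= expr0 expr1 xi_x.
- have -> : Negz m.+1 + 1 = Negz m by rewrite !NegzE; lia.
  by rewrite /= [xi ^+ m.+2]exprSr -mulrA xi_x mulr1.
Qed.

Lemma zpowB1 a : zpow x xi (a - 1) = zpow x xi a * xi.
Proof.
case: a => [[|m]|m].
- by rewrite /= expr0 expr1 mul1r.
- have -> : Posz m.+1 - 1 = Posz m by rewrite -addn1 PoszD addrK.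
  by rewrite /= exprSr -mulrA x_xi mulr1.
- have -> : Negz m - 1 = Negz m.+1 by rewrite !NegzE; lia.
  by rewrite /= [xi ^+ m.+2]exprSr.
Qed.

Lemma zpowD a b : zpow x xi (a + b) = zpow x xi a * zpow x xi b.
Proof.
case: b => n; elim: n => [|n IH].
- by rewrite addr0 /= expr0 mulr1.
- have -> : a + Posz n.+1 = (a + Posz n) + 1 by rewrite -addn1 PoszD addrA.
  by rewrite zpowD1 IH /= exprSr mulrA.
- by rewrite zpowB1 /= expr1.
- have -> : a + Negz n.+1 = (a + Negz n) - 1 by rewrite !NegzE; lia.
  by rewrite zpowB1 IH /= [xi ^+ n.+2]exprSr mulrA.
Qed.

End IntegerPowers.

Definition wedge_sum {n} (a : 'I_n -> int * int) : int :=
  \sum_(s < n) \sum_(k < n | (s < k)%N) wedge (a k) (a s).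

Lemma wedge_sumSr n (a : 'I_n.+1 -> int * int) :
  wedge_sum a = wedge_sum (fun k => a (widen_ord (leqnSn n) k)) +
    wedge (a ord_max) (\sum_(j < n) (a (widen_ord (leqnSn n) j)).1,
                       \sum_(j < n) (a (widen_ord (leqnSn n) j)).2).
Proof.
rewrite /wedge_sum big_ord_recr /= [X in _ + X]big_pred0 => [|k]; last first.
  by rewrite /= ltnNge -ltnS ltn_ord.
rewrite addr0 (eq_bigr (fun s : 'I_n =>
    \sum_(k < n | (s < k)%N) wedge (a (widen_ord (leqnSn n) k)) (a (widen_ord (leqnSn n) s))
    + wedge (a ord_max) (a (widen_ord (leqnSn n) s)))) => [|s _].
  by rewrite big_split /=; congr (_ + _); rewrite /wedge /= !mulr_sumr -sumrB.
by rewrite big_mkcond big_ord_recr /= ltn_ord -big_mkcond.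
Qed.

Section QuantumTorus.
Variables (R : realType) (A : algType R[i]) (q h : R[i]) (Dx Dxi Dy Dyi : A).
Hypotheses (h_neq0 : h != 0) (hq : h ^+ 2 = q).
Hypotheses (Dx_Dxi : Dx * Dxi = 1) (Dxi_Dx : Dxi * Dx = 1).
Hypotheses (Dy_Dyi : Dy * Dyi = 1) (Dyi_Dy : Dyi * Dy = 1).
Hypothesis commute_DxDy : forall a b : int,
  zpow Dx Dxi a * zpow Dy Dyi b = (q ^ (a * b)) *: (zpow Dy Dyi b * zpow Dx Dxi a).

Local Notation T := (Tm h Dx Dxi Dy Dyi).

Lemma TmM m n : T m * T n = h ^ wedge n m *: T (m.1 + n.1, m.2 + n.2).
Proof.
rewrite /Tm /= -scalerAl -scalerAr scalerA.
rewrite mulrA -[_ * _ * zpow Dy Dyi n.1]mulrA commute_DxDy.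
rewrite -scalerAr -scalerAl scalerA !mulrA -zpowD // -mulrA -zpowD // scalerA.
congr (_ *: _).
have -> : q ^ (m.2 * n.1) = h ^ (2 * (m.2 * n.1)) by rewrite -hq -(exprz_exp h 2).
by rewrite -!expfzDr //; congr (h ^ _); rewrite /wedge; ring.
Qed.

Lemma prod_Tm n (a : 'I_n -> int * int) :
  \prod_(k < n) T (a k) = h ^ wedge_sum a *: T (\sum_(j < n) (a j).1, \sum_(j < n) (a j).2).
Proof.
elim: n a => [|n IH] a.
  by rewrite /wedge_sum /Tm !big_ord0 /= mulr0 !expr0z !scale1r expr0 mulr1.
rewrite big_ord_recr /= IH -scalerAl TmM scalerA -expfzDr // -wedge_sumSr.
by rewrite [in RHS](big_ord_recr n) [in RHS](big_ord_recr n).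
Qed.

End QuantumTorus.

Theorem theorem5 (R : realType) (A : algType R[i]) (q h : R[i])
  (Dx Dxi Dy Dyi : A) :
  q != 0 -> h ^+ 2 = q ->
  Dx * Dxi = 1 -> Dxi * Dx = 1 -> Dy * Dyi = 1 -> Dyi * Dy = 1 ->
  (forall a b : int,
      zpow Dx Dxi a * zpow Dy Dyi b = (q ^ (a * b)) *: (zpow Dy Dyi b * zpow Dx Dxi a)) ->
  forall (n : nat) (i : 'I_n -> int * int), (2 <= n)%N ->
  bracket [seq Tm h Dx Dxi Dy Dyi (i j) | j <- enum 'I_n] =
  \sum_(sigma : 'S_n)
     ((-1) ^+ odd_perm sigma *
      h ^ (\sum_(s < n) \sum_(k < n | (s < k)%N) wedge (i (sigma k)) (i (sigma s))))
     *: Tm h Dx Dxi Dy Dyi (\sum_(j < n) (i j).1, \sum_(j < n) (i j).2).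
Proof.
move=> q_neq0 hq Dx_Dxi Dxi_Dx Dy_Dyi Dyi_Dy commute_DxDy n i n_ge2.
have h_neq0 : h != 0 by apply: contraNneq q_neq0 => h0; rewrite -hq h0 expr2 mulr0.
have size_Ts : size [seq Tm h Dx Dxi Dy Dyi (i j) | j <- enum 'I_n] = n.
  by rewrite size_map size_enum_ord.
rewrite bracket_standard_poly size_Ts //; apply: eq_bigr => sigma _.
have -> : \prod_(k < n) nth 0 [seq Tm h Dx Dxi Dy Dyi (i j) | j <- enum 'I_n] (sigma k)
        = \prod_(k < n) Tm h Dx Dxi Dy Dyi (i (sigma k)).
  by apply: eq_bigr => k _; rewrite (nth_map (sigma k)) ?size_enum_ord ?nth_ord_enum.
rewrite (@prod_Tm _ _ q) //.
have sum_sigma (f : int * int -> int) : \sum_(j < n) f (i (sigma j)) = \sum_(j < n) f (i j).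
  by rewrite [RHS](reindex_perm sigma).
by rewrite (sum_sigma fst) (sum_sigma snd) -scalerA scaler_sign mulr_sign.
Qed.
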